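(* Let $m\ge2$, $K$ an algebraic number field, $a(z)\in K[z]$ monic of degree $m$, $b(z)\in K[z]$ of degree $\le m-1$ with $z^{m-1}$-coefficient $b_{m-1}$, with $a(z)=\prod_{i=1}^m(z-\alpha_i)$, $\alpha_i\in K$ pairwise distinct, $s_i:=b(\alpha_i)/a'(\alpha_i)\in\mathbb{Q}\setminus\mathbb{Z}_{\le-1}$, $b_{m-1}\notin\mathbb{Z}_{<-1}$. Let $v$ be a non-Archimedean place of $K$ and $n$ a positive integer. Then \[\log\max_{0\le\ell\le m}\{\|P_{n,\ell}\|_v\}\le\sum_{i=1}^m\bigl(\log|\mu_n(s_i)|_v^{-1}+n\,\mathrm{h}_v(\alpha_i)\bigr).\]
   Context: $P_{n,\ell}(z)=\frac1{n!}(\frac{d}{dz}+\frac{b(z)}{a(z)})^n(a(z)^nz^\ell)$ (operator applied $n$ times; a polynomial). For $R=\sum_kr_kz^k$, $\|R\|_v=\max_k|r_k|_v$. Absolute values normalized: $|p|_v=p^{-[K_v:\mathbb{Q}_p]/[K:\mathbb{Q}]}$ for $v\mid p$; $\mathrm{h}_v(\alpha)=\log\max\{1,|\alpha|_v\}$. For $s\in\mathbb{Q}$, $\mu_n(s)=\mathrm{den}(s)^n\prod_{q\text{ prime},\,q\mid\mathrm{den}(s)}q^{\lfloor n/(q-1)\rfloor}$. *)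

From HB Require Import structures.
From mathcomp Require Import all_boot all_order all_algebra all_field.
From mathcomp Require Import all_classical all_reals all_analysis.
Set Implicit Arguments. Unset Strict Implicit. Unset Printing Implicit Defensive.
Import Order.TTheory GRing.Theory Num.Theory.
Local Open Scope ring_scope.

(* A non-Archimedean (ultrametric), nontrivial absolute value on a field K,
   real-valued.  A non-Archimedean place v of a number field is represented by
   such an absolute value (any representative). *)
Definition nonarch_abs (K : fieldType) (R : realType) (v : K -> R) : Prop :=
  [/\ v 0 = 0,
      (forall x, x != 0 -> 0 < v x),
      (forall x y, v (x * y) = v x * v y),
      (forall x y, v (x + y) <= Num.max (v x) (v y))
    & exists x, x != 0 /\ v x != 1].

(* one application of  d/dz + b/a  to a polynomial Q (divisible by a):
   Q |-> Q' + b Q / a  (the division is exact in all uses below) *)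
Definition Dba (K : fieldType) (a b : {poly K}) (Q : {poly K}) : {poly K} :=
  Q^`() + (b * Q) %/ a.

Definition Pnl (K : fieldType) (a b : {poly K}) (n l : nat) : {poly K} :=
  (n`!%:R)^-1 *: iter n (Dba a b) (a ^+ n * 'X^l).

Definition normv (K : fieldType) (R : realType) (v : K -> R) (P : {poly K}) : R :=
  \big[Num.max/0]_(k < size P) v P`_k.

Definition hv (K : fieldType) (R : realType) (v : K -> R) (x : K) : R :=
  ln (Num.max 1 (v x)).

Definition mu (n : nat) (s : rat) : nat :=
  let d := absz (denq s) in
  (d ^ n * \prod_(q <- primes d) q ^ (n %/ q.-1))%N.

(* Write b/a as the partial fraction sum of the s_i/(z - alpha_i).  The operator
   d/dz + b/a then obeys a Leibniz rule along the factorization of a, so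
   (d/dz + b/a)^n (a^n z^l) / n! is a sum of binomial multiples of products of
   the derivatives (z^l)^(k) / k!, powers of the z - alpha_i, and the numbers
   (s_i + n)(s_i + n - 1)...(s_i + n - k + 1) / k!.  The latter become integers
   after multiplication by mu_n(s_i): Legendre's formula handles the primes
   dividing den(s_i), and for the other primes den(s_i) is invertible, so the
   product is congruent to a multiple of k consecutive integers.  The
   ultrametric inequality then bounds every coefficient of P_{n,l} by
   prod_i |mu_n(s_i)|_v^-1 max(1, |alpha_i|_v)^n. *)

From HB Require Import structures.
From mathcomp Require Import all_boot all_order all_algebra all_field.
From mathcomp Require Import all_classical all_reals all_analysis.
From mathcomp Require Import zify ring lra.

Set Implicit Arguments.
Unset Strict Implicit.
Unset Printing Implicit Defensive.
Import Order.TTheory GRing.Theory Num.Theory.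
Local Open Scope ring_scope.

Lemma legendre_partial_le p k N : prime p ->
  (p.-1 * (\sum_(1 <= i < N.+1) k %/ p ^ i) + k %/ p ^ N <= k)%N.
Proof.
move=> p_pr; elim: N => [|N IH]; first by rewrite big_geq // muln0 expn0 divn1.
rewrite big_nat_recr //= mulnDr -addnA; apply: leq_trans IH.
rewrite leq_add2l expnSr divnMA.
have := leq_divM (k %/ p ^ N) p.
have := prednK (prime_gt0 p_pr).
move: (k %/ p ^ N)%N ((k %/ p ^ N) %/ p)%N (p.-1) => y z q <-; nia.
Qed.

Lemma logn_fact_le_div p k n : prime p -> (k <= n)%N ->
  (logn p k`! <= n %/ p.-1)%N.
Proof.
move=> p_pr le_kn; have p1_gt0 : (0 < p.-1)%N by rewrite -ltnS prednK ?prime_gt1 ?prime_gt0.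
rewrite leq_divRL // mulnC logn_fact //.
exact: leq_trans (leq_trans (leq_addr _ _) (legendre_partial_le k k p_pr)) le_kn.
Qed.

Lemma eqz_mod_prod (Q : int) k (f g : nat -> int) :
  (forall t, (t < k)%N -> (f t == g t %[mod Q])%Z) ->
  (\prod_(t < k) f t == \prod_(t < k) g t %[mod Q])%Z.
Proof.
elim: k => [|k IH] fg; first by rewrite !big_ord0.
rewrite !big_ord_recr /=; apply/eqP.
rewrite -modzMm (eqP (IH _)) => [|t /ltnW]; last exact: fg.
by rewrite (eqP (fg k _)) // modzMm.
Qed.

(* [d] is invertible modulo [Q], so [c - t d] is congruent to [d (x - t)] for a
   natural number [x >= k], and the product of [k] consecutive integers is
   divisible by [k!]. *)
Lemma dvdz_prod_arith (Q d : nat) (c : int) k : (0 < Q)%N -> coprime Q d ->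
  (Q %| k`!)%N -> (Q%:Z %| \prod_(t < k) (c - t%:R * d%:R))%Z.
Proof.
move=> Q_gt0 coQd dvd_Qk.
have [u [w Huw]] := Bezoutz d%:Z Q%:Z.
rewrite coprime_sym in coQd; rewrite /gcdz /= (eqP coQd) in Huw.
pose x : nat := (`|((u * c) %% Q)%Z|%N + Q * k)%N.
have le_kx : (k <= x)%N by apply: leq_trans (leq_addl _ _); apply: leq_pmull.
have x_uc : (x%:Z == u * c %[mod Q])%Z.
  rewrite /x PoszD PoszM gez0_abs ?modz_ge0 ?eqz_nat -?lt0n //.
  by apply/eqP; rewrite addrC mulrC modzMDl modz_mod.
have shift t : ((d%:Z * (x%:Z - t%:R)) == c - t%:R * d%:R %[mod Q])%Z.
  move: x_uc; rewrite !eqz_mod_dvd => /dvdzP[z xE]; apply/dvdzP.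
  exists (d%:Z * z - w * c).
  have -> : x%:Z = u * c + z * Q%:Z by rewrite -xE; ring.
  transitivity (c * (u * d%:Z + w * Q%:Z - 1) + (d%:Z * z - w * c) * Q%:Z).
    by ring.
  by rewrite Huw subrr mulr0 add0r.
have := @eqz_mod_prod Q k (fun t => d%:Z * (x%:Z - t%:R)) (fun t => c - t%:R * d%:R).
rewrite eqz_mod_dvd => /(_ (fun t _ => shift t)) dvd_diff.
have ffactE : \prod_(t < k) (x%:Z - t%:R) = (x ^_ k)%:R.
  rewrite ffact_prod natr_prod; apply: eq_bigr => t _.
  by rewrite natrB //; move: (ltn_ord t); lia.
have dvd_ffact : (Q%:Z %| (x ^_ k)%:R)%Z.
  by rewrite natz dvdzE /= (dvdn_trans dvd_Qk) // -bin_ffact dvdn_mull.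
move: dvd_diff; set P := \prod_(t < k) (d%:Z * _) => dvd_diff.
rewrite -(subKr P (\prod_(t < k) _)) rpredB //.
by rewrite /P big_split /= ffactE dvdz_mull.
Qed.

(* Primes dividing [d] are absorbed by the [mu] factor (Legendre's formula);
   the part of [k!] coprime to [d] divides the product itself. *)
Lemma dvdz_fact_prod_arith (d n k : nat) (c : int) : (0 < d)%N -> (k <= n)%N ->
  (k`!%:Z %| (\prod_(q <- primes d) q ^ (n %/ q.-1))%:Z
               * \prod_(t < k) (c - t%:R * d%:R))%Z.
Proof.
move=> d_gt0 le_kn; rewrite dvdzE abszM /=.
apply/dvdn_partP => [|p]; first exact: fact_gt0.
rewrite mem_primes p_part => /andP[p_pr _].
have [p_d | p_nd] := boolP (p \in primes d).
  apply/dvdn_mulr/(dvdn_trans (dvdn_exp2l p (logn_fact_le_div p_pr le_kn))).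
  by rewrite (bigD1_seq p) ?primes_uniq //= dvdn_mulr.
apply: dvdn_mull; rewrite -[(p ^ _)%N]absz_nat -dvdzE.
apply: dvdz_prod_arith (pfactor_dvdnn _ _); first by rewrite expn_gt0 prime_gt0.
by rewrite coprimeXl // prime_coprime //; move: p_nd; rewrite mem_primes p_pr d_gt0.
Qed.

Lemma mu_ffact_int (s : rat) (n k : nat) : (k <= n)%N ->
  exists z : int, (mu n s)%:R * \prod_(t < k) (n%:R + s - t%:R) = k`!%:R * z%:~R.
Proof.
move=> le_kn; set d := `|denq s|%N.
have d_gt0 : (0 < d)%N by rewrite absz_gt0 gt_eqF ?denq_gt0.
have d_neq0 : (d%:R : rat) != 0 by rewrite pnatr_eq0 -lt0n.
set c := numq s + n%:Z * d%:Z.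
have [z Hz] := dvdzP (dvdz_fact_prod_arith c d_gt0 le_kn).
exists ((d ^ (n - k))%:Z * z).
have sE : s = (numq s)%:~R / d%:R.
  by rewrite -[s in LHS]divq_num_den -[d%:R]/((d%:Z)%:~R) gtz0_abs ?denq_gt0.
have prodE : \prod_(t < k) (n%:R + s - t%:R)
    = (\prod_(t < k) (c - t%:R * d%:R))%:~R / d%:R ^+ k.
  have -> : d%:R ^+ k = \prod_(t < k) (d%:R : rat) by rewrite prodr_const card_ord.
  rewrite rmorph_prod -prodf_div; apply: eq_bigr => t _.
  by rewrite sE /c !(rmorphB, rmorphD, rmorphM) /= -!pmulrn; field.
move/(congr1 (fun x : int => x%:~R : rat)): Hz; rewrite /= !rmorphM /= -!pmulrn.
set E := (\prod_(q <- primes d) _)%N; set P := \prod_(t < k) _ => Hz.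
have dE : (d%:R : rat) ^+ n = d%:R ^+ (n - k) * d%:R ^+ k by rewrite -exprD subnK.
rewrite /mu -/d -/E prodE !natrX dE.
transitivity (d%:R ^+ (n - k) * (E%:R * P%:~R) : rat).
  by field; rewrite expf_neq0.
by rewrite Hz; ring.
Qed.

Lemma mu_gt0 n s : (0 < mu n s)%N.
Proof.
rewrite /mu muln_gt0 expn_gt0 absz_gt0 gt_eqF ?denq_gt0 //= big_seq.
elim/big_ind: _ => // [x y x_gt0 y_gt0 | q]; first by rewrite muln_gt0 x_gt0.
by rewrite mem_primes expn_gt0 => /andP[/prime_gt0 ->].
Qed.

Section DbaCofactor.
Variable K : fieldType.
Implicit Types (A B F : {poly K}) (N : K).

(* The cofactor of [A ^+ (n - k)] in [(d/dz + B/A)^k (A ^+ n * F)], for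
   [N = n%:R]; see [iter_Dba]. *)
Fixpoint Dba_cof A B F N k : {poly K} :=
  if k is k'.+1 then
    let P := Dba_cof A B F N k' in A * P^`() + ((N - k'%:R) *: A^`() + B) * P
  else F.

Lemma mul_derivX A e : A * (A ^+ e)^`() = A^`() * A ^+ e *+ e.
Proof.
rewrite deriv_exp; case: e => [|e]; first by rewrite !mulr0n mulr0.
by rewrite exprS -!mulrnAr mulrCA.
Qed.

Lemma iter_Dba A B F n j : A != 0 -> (j <= n)%N ->
  iter j (Dba A B) (A ^+ n * F) = A ^+ (n - j) * Dba_cof A B F n%:R j.
Proof.
move=> A_neq0; elim: j => [|j IH] le_jn; first by rewrite subn0.
rewrite iterS IH ?(ltnW le_jn) // /Dba /= -(subnSK le_jn).
rewrite -natrB ?(ltnW le_jn) // -(subnSK le_jn).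
set e := (n - j.+1)%N; set P := Dba_cof A B F n%:R j.
have -> : B * (A ^+ e.+1 * P) = (B * A ^+ e * P) * A by rewrite exprSr; ring.
rewrite mulpK // derivM exprS derivM mul_derivX -mul_polyC polyC_natr -mulr_natr.
by ring.
Qed.

Lemma Dba_cof_derivn F N k : Dba_cof 1 0 F N k = F^`(k).
Proof.
elim: k => [|k IH] //=.
by rewrite IH mul1r -polyC1 derivC scaler0 !add0r mul0r addr0.
Qed.

Lemma Dba_cof_XsubC x s N k :
  Dba_cof ('X - x%:P) s%:P 1 N k = (\prod_(t < k) (N - t%:R + s))%:P.
Proof.
elim: k => [|k IH] /=; first by rewrite big_ord0.
rewrite IH derivC mulr0 add0r derivXsubC alg_polyC -rmorphD -rmorphM.
by rewrite big_ord_recr /= mulrC.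
Qed.

Section Product.
Variables (A1 A2 B1 B2 F1 F2 : {poly K}) (N : K).

Definition Dba_cof_term e1 e2 :=
  A1 ^+ e1 * A2 ^+ e2 * Dba_cof A1 B1 F1 N e2 * Dba_cof A2 B2 F2 N e1.

Lemma Dba_cof_term_step e1 e2 :
  (A1 * A2) * (Dba_cof_term e1 e2)^`()
    + ((N - (e1 + e2)%:R) *: (A1 * A2)^`() + (B1 * A2 + B2 * A1)) * Dba_cof_term e1 e2
  = Dba_cof_term e1 e2.+1 + Dba_cof_term e1.+1 e2.
Proof.
rewrite /Dba_cof_term /= !exprS !derivM -!mul_polyC !rmorphB /= !polyC_natr natrD.
have D1E := mul_derivX A1 e1; have D2E := mul_derivX A2 e2.
rewrite -mulr_natr in D1E; rewrite -mulr_natr in D2E.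
set P1 := Dba_cof A1 B1 F1 N e2; set P2 := Dba_cof A2 B2 F2 N e1.
set D1 := (A1 ^+ e1)^`() in D1E *; set D2 := (A2 ^+ e2)^`() in D2E *.
apply/eqP; rewrite -subr_eq0; apply/eqP.
transitivity (A2 * A2 ^+ e2 * P1 * P2 * (A1 * D1 - A1^`() * A1 ^+ e1 * e1%:R)
            + A1 * A1 ^+ e1 * P1 * P2 * (A2 * D2 - A2^`() * A2 ^+ e2 * e2%:R)).
  by ring.
by rewrite D1E D2E !subrr !mulr0 addr0.
Qed.

(* A Leibniz formula: [d/dz + (B1 A2 + B2 A1)/(A1 A2)] acts on a product as
   the sum of [d/dz + B1/A1] on one factor and [d/dz + B2/A2] on the other. *)
Lemma Dba_cofM j :
  Dba_cof (A1 * A2) (B1 * A2 + B2 * A1) (F1 * F2) N j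
  = \sum_(k < j.+1) 'C(j, k)%:R *: Dba_cof_term (j - k) k.
Proof.
elim: j => [|j IH]; first by rewrite big_ord1 /Dba_cof_term /= !expr0 !mul1r scale1r.
rewrite /= IH raddf_sum !mulr_sumr -big_split /=.
rewrite (eq_bigr (fun k : 'I_j.+1 => 'C(j, k)%:R *:
           (Dba_cof_term (j - k) k.+1 + Dba_cof_term (j - k).+1 k))); last first.
  move=> k _; rewrite derivZ -!scalerAr -scalerDr; congr (_ *: _).
  by rewrite -Dba_cof_term_step subnK // -ltnS.
rewrite (eq_bigr _ (fun k _ => scalerDr _ _ _)) big_split /=.
rewrite [RHS]big_ord_recl /= subn0 bin0 scale1r.
rewrite [in RHS](eq_bigr (fun k : 'I_j.+1 => 'C(j, k)%:R *: Dba_cof_term (j - k) k.+1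
           + 'C(j, k.+1)%:R *: Dba_cof_term (j - k) k.+1)); last first.
  by move=> k _; rewrite /bump /= ?add1n binS natrD scalerDl subSS addrC.
rewrite big_split /= addrCA; congr (_ + _).
rewrite big_ord_recl /= subn0 bin0 scale1r; congr (_ + _).
rewrite big_ord_recr /= bin_small // scale0r addr0.
by apply: eq_bigr => k _; rewrite /bump /= ?add1n subnSK.
Qed.

End Product.

End DbaCofactor.

Section PartialFractions.
Variables (K : fieldType) (I : eqType) (alpha : I -> K).
Implicit Types (r : seq I) (w : I -> K).

Definition nodal r := \prod_(i <- r) ('X - (alpha i)%:P).

(* [pfrac_num w r / nodal r] is the sum of the [w i / ('X - alpha i)], i in [r]. *)
Fixpoint pfrac_num w r : {poly K} :=
  if r is i :: r' then (w i)%:P * nodal r' + pfrac_num w r' * ('X - (alpha i)%:P)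
  else 0.

Lemma nodal_cons i r : nodal (i :: r) = ('X - (alpha i)%:P) * nodal r.
Proof. exact: big_cons. Qed.

Lemma nodal_monic r : nodal r \is monic.
Proof. exact: monic_prod_XsubC. Qed.

Lemma size_nodal r : size (nodal r) = (size r).+1.
Proof. exact: size_prod_XsubC. Qed.

Lemma deriv_nodal r : (nodal r)^`() = pfrac_num (fun=> 1) r.
Proof.
elim: r => [|i r IH]; first by rewrite /nodal big_nil -polyC1 derivC.
by rewrite nodal_cons derivM derivXsubC IH /= polyC1 !mul1r [_ * pfrac_num _ _]mulrC.
Qed.

Lemma size_pfrac_num w r : (size (pfrac_num w r) <= size r)%N.
Proof.
elim: r => [|i r IH] /=; first by rewrite size_poly0.
apply: leq_trans (size_polyD _ _) _; rewrite geq_max mul_polyC.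
rewrite (leq_trans (size_scale_leq _ _)) ?size_nodal //=.
by rewrite (leq_trans (size_polyMleq _ _)) // size_XsubC addn2.
Qed.

Hypothesis alpha_inj : injective alpha.

Lemma root_nodal r j : root (nodal r) (alpha j) = (j \in r).
Proof.
have -> : nodal r = \prod_(a <- map alpha r) ('X - a%:P) by rewrite big_map.
by rewrite root_prod_XsubC mem_map.
Qed.

Lemma pfrac_num_eval w r j : uniq r -> j \in r ->
  (pfrac_num w r).[alpha j] = w j * (nodal r)^`().[alpha j].
Proof.
rewrite deriv_nodal; elim: r => [//|i r IH] /= /andP[i_notin_r uniq_r].
rewrite !hornerD !hornerM hornerXsubC !hornerC inE => /predU1P[->|j_in_r].
  by rewrite subrr !mulr0 !addr0 mul1r.
have /rootP -> : root (nodal r) (alpha j) by rewrite root_nodal.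
by rewrite !mulr0 !add0r IH // mulrA.
Qed.

Lemma deriv_nodal_neq0 r j : uniq r -> j \in r -> (nodal r)^`().[alpha j] != 0.
Proof.
rewrite deriv_nodal; elim: r => [//|i r IH] /= /andP[i_notin_r uniq_r].
rewrite hornerD !hornerM hornerXsubC hornerC inE mul1r => /predU1P[->|j_in_r].
  by rewrite subrr mulr0 addr0 -rootE root_nodal.
have /rootP -> : root (nodal r) (alpha j) by rewrite root_nodal.
rewrite add0r mulf_neq0 ?IH //.
by rewrite subr_eq0 (inj_eq alpha_inj); apply: contraNneq i_notin_r => <-.
Qed.

Lemma pfrac_num_interp (b : {poly K}) w r : uniq r -> (size b <= size r)%N ->
  (forall j, j \in r -> b.[alpha j] = w j * (nodal r)^`().[alpha j]) ->
  b = pfrac_num w r.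
Proof.
move=> uniq_r size_b b_eval; apply/eqP; rewrite -subr_eq0; apply/eqP.
apply: (@roots_geq_poly_eq0 _ _ (map alpha r)).
- apply/allP => _ /mapP[j j_in_r ->].
  by rewrite rootE hornerD hornerN b_eval // pfrac_num_eval // subrr.
- by rewrite map_inj_uniq.
rewrite size_map (leq_trans (size_polyD _ _)) // geq_max size_b size_polyN.
exact: size_pfrac_num.
Qed.

End PartialFractions.

Section NonArchimedean.
Variables (K : fieldType) (R : realType) (v : K -> R).
Hypothesis v_nonarch : nonarch_abs v.

Lemma absv0 : v 0 = 0. Proof. by case: v_nonarch. Qed.

Lemma absv_gt0 x : x != 0 -> 0 < v x. Proof. by case: v_nonarch => _ + _ _ _; apply. Qed.

Lemma absvM x y : v (x * y) = v x * v y. Proof. by case: v_nonarch => _ _ + _ _; apply. Qed.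

Lemma absvD x y : v (x + y) <= Num.max (v x) (v y).
Proof. by case: v_nonarch => _ _ _ + _; apply. Qed.

Lemma absv_ge0 x : 0 <= v x.
Proof. by have [->|/absv_gt0/ltW //] := eqVneq x 0; rewrite absv0. Qed.

Lemma absv1 : v 1 = 1.
Proof.
have v1_neq0 : v 1 != 0 by rewrite lt0r_neq0 ?absv_gt0 ?oner_neq0.
by apply: (mulfI v1_neq0); rewrite -absvM !mulr1.
Qed.

Lemma absvN1 : v (-1) = 1.
Proof. by apply/eqP; rewrite -sqrp_eq1 ?absv_ge0 // expr2 -absvM mulrNN mulr1 absv1. Qed.

Lemma absvN x : v (- x) = v x.
Proof. by rewrite -mulN1r absvM absvN1 mul1r. Qed.

Lemma absvV x : v x^-1 = (v x)^-1.
Proof.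
have [->|x_neq0] := eqVneq x 0; first by rewrite invr0 absv0 invr0.
have vx_neq0 : v x != 0 by rewrite lt0r_neq0 ?absv_gt0.
by apply: (mulfI vx_neq0); rewrite -absvM !mulfV ?absv1.
Qed.

Lemma absvD_le x y c : v x <= c -> v y <= c -> v (x + y) <= c.
Proof. by move=> le_xc le_yc; apply: le_trans (absvD x y) _; rewrite ge_max le_xc. Qed.

Lemma absv_sum_le I (r : seq I) (f : I -> K) c :
  0 <= c -> (forall i, v (f i) <= c) -> v (\sum_(i <- r) f i) <= c.
Proof.
move=> c_ge0 le_fc; elim/big_rec: _ => [|i y _ le_yc]; first by rewrite absv0.
exact: absvD_le.
Qed.

Lemma absv_nat_le1 k : v k%:R <= 1.
Proof.
elim: k => [|k IH]; first by rewrite absv0.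
by rewrite -addn1 natrD absvD_le ?absv1.
Qed.

Lemma absv_int_le1 (z : int) : v z%:~R <= 1.
Proof. by case: z => k; rewrite ?NegzE ?rmorphN ?absvN absv_nat_le1. Qed.

Definition coef_bounded (P : {poly K}) (c : R) := forall i, v P`_i <= c.

Lemma coef_bounded_le P c c' : coef_bounded P c -> c <= c' -> coef_bounded P c'.
Proof. by move=> bP le_cc' i; apply: le_trans (bP i) le_cc'. Qed.

Lemma coef_boundedD P Q c :
  coef_bounded P c -> coef_bounded Q c -> coef_bounded (P + Q) c.
Proof. by move=> bP bQ i; rewrite coefD absvD_le. Qed.

Lemma coef_bounded_sum I (r : seq I) (F : I -> {poly K}) c : 0 <= c ->
  (forall i, coef_bounded (F i) c) -> coef_bounded (\sum_(i <- r) F i) c.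
Proof.
move=> c_ge0 bF; elim/big_rec: _ => [i|j Q _]; last exact: coef_boundedD.
by rewrite coef0 absv0.
Qed.

Lemma coef_boundedZ P c x : coef_bounded P c -> coef_bounded (x *: P) (v x * c).
Proof. by move=> bP i; rewrite coefZ absvM ler_wpM2l ?absv_ge0. Qed.

Lemma coef_boundedC x : coef_bounded x%:P (v x).
Proof. by move=> i; rewrite coefC; case: eqP; rewrite ?absv0 ?absv_ge0. Qed.

Lemma coef_bounded1 : coef_bounded 1 1.
Proof. by rewrite -absv1 -polyC1; apply: coef_boundedC. Qed.

Lemma coef_bounded_ge0 P c : coef_bounded P c -> 0 <= c.
Proof. by move/(_ 0%N); apply: le_trans; rewrite absv_ge0. Qed.

Lemma coef_boundedM P Q c d :
  coef_bounded P c -> coef_bounded Q d -> coef_bounded (P * Q) (c * d).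
Proof.
move=> bP bQ i; rewrite coefM; apply: absv_sum_le => [|j].
  by rewrite mulr_ge0 ?(coef_bounded_ge0 bP) ?(coef_bounded_ge0 bQ).
by rewrite absvM ler_pM ?absv_ge0.
Qed.

Lemma coef_boundedX P c e : coef_bounded P c -> coef_bounded (P ^+ e) (c ^+ e).
Proof.
move=> bP; elim: e => [|e IH]; first by rewrite !expr0; apply: coef_bounded1.
by rewrite !exprS; apply: coef_boundedM.
Qed.

Lemma coef_bounded_XsubC x : coef_bounded ('X - x%:P) (Num.max 1 (v x)).
Proof.
move=> [|[|i]]; rewrite coefB coefX coefC /= ?sub0r ?subr0 ?absvN ?absv1 ?le_max ?lexx ?orbT //.
by rewrite absv0 ler01.
Qed.

Lemma coef_bounded_derivn P k : coef_bounded P 1 -> coef_bounded P^`(k) (v k`!%:R).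
Proof.
move=> bP j; rewrite coef_derivn -[P`_ _ *+ _]mulr_natr -bin_ffact natrM !absvM.
rewrite -[leRHS]mul1r ler_pM ?mulr_ge0 ?absv_ge0 // -[leRHS]mul1r.
by rewrite ler_pM ?absv_ge0 ?absv_nat_le1.
Qed.

Lemma normv_le P c : coef_bounded P c -> normv v P <= c.
Proof. by move=> bP; apply: bigmax_le => //; exact: coef_bounded_ge0 bP. Qed.

Section NodalBound.
Variables (I : eqType) (alpha w : I -> K) (beta : I -> R) (n : nat).
Hypothesis absv_prod_shift_le : forall i k, (k <= n)%N ->
  v (\prod_(t < k) (n%:R - t%:R + w i)) <= v k`!%:R * beta i.

Local Notation M i := (Num.max 1 (v (alpha i))).

Lemma coef_bounded_nodal r : coef_bounded (nodal alpha r) (\prod_(i <- r) M i).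
Proof.
elim: r => [|i r IH]; first by rewrite /nodal !big_nil; apply: coef_bounded1.
by rewrite nodal_cons big_cons; apply: coef_boundedM => //; apply: coef_bounded_XsubC.
Qed.

Lemma coef_bounded_Dba_cof_nodal F r k : coef_bounded F 1 -> (k <= n)%N ->
  coef_bounded (Dba_cof (nodal alpha r) (pfrac_num alpha w r) F n%:R k)
    (v k`!%:R * \prod_(i <- r) beta i * (\prod_(i <- r) M i) ^+ k).
Proof.
move=> bF; elim: r k => [|i r IH] k le_kn.
  rewrite /nodal /= !big_nil Dba_cof_derivn expr1n !mulr1.
  exact: coef_bounded_derivn.
rewrite nodal_cons /= -[F]mul1r Dba_cofM !big_cons.
pose T kk := Dba_cof_term ('X - (alpha i)%:P) (nodal alpha r) (w i)%:P
                (pfrac_num alpha w r) 1 F n%:R (k - kk) kk.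
have term_le (kk : 'I_k.+1) : coef_bounded ('C(k, kk)%:R *: T kk)
    (v k`!%:R * (beta i * \prod_(j <- r) beta j) * (M i * \prod_(j <- r) M j) ^+ k).
  have le_kk_k : (kk <= k)%N by rewrite -ltnS.
  have bT : coef_bounded ('C(k, kk)%:R *: T kk)
      (v 'C(k, kk)%:R * (M i ^+ (k - kk) * (\prod_(j <- r) M j) ^+ kk
         * (v kk`!%:R * beta i)
         * (v (k - kk)`!%:R * \prod_(j <- r) beta j * (\prod_(j <- r) M j) ^+ (k - kk)))).
    apply/coef_boundedZ/coef_boundedM; last exact: IH (leq_trans (leq_subr _ _) le_kn).
    apply: coef_boundedM.
      by apply: coef_boundedM; apply: coef_boundedX;
        [apply: coef_bounded_XsubC | apply: coef_bounded_nodal].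
    rewrite Dba_cof_XsubC; apply: coef_bounded_le (coef_boundedC _) _.
    exact: absv_prod_shift_le (leq_trans le_kk_k le_kn).
  apply: coef_bounded_le (bT) _; set L := (X in X <= _).
  have L_ge0 : 0 <= L := coef_bounded_ge0 bT.
  have splitk x : x ^+ k = x ^+ (k - kk) * x ^+ kk by rewrite -exprD subnK.
  have -> : v k`!%:R * (beta i * \prod_(j <- r) beta j) * (M i * \prod_(j <- r) M j) ^+ k
            = L * M i ^+ kk.
    by rewrite /L -(bin_fact le_kk_k) !natrM !absvM exprMn !splitk; ring.
  by rewrite ler_peMr // exprn_ege1 // le_max lexx.
apply: coef_bounded_sum (coef_bounded_ge0 (term_le ord0)) _ => kk.
exact: term_le.
Qed.

Lemma beta_ge1 i : 1 <= beta i.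
Proof. by have := absv_prod_shift_le i (leq0n n); rewrite big_ord0 absv1 mul1r. Qed.

Lemma coef_bounded_Pnl r l :
  coef_bounded (Pnl (nodal alpha r) (pfrac_num alpha w r) n l)
    (\prod_(i <- r) beta i * (\prod_(i <- r) M i) ^+ n).
Proof.
rewrite /Pnl iter_Dba ?monic_neq0 ?nodal_monic // subnn expr0 mul1r.
have [->|fact_neq0] := eqVneq (n`!%:R : K) 0.
  move=> j; rewrite invr0 scale0r coef0 absv0 mulr_ge0 ?exprn_ge0 ?prodr_ge0 // => i _.
    exact: le_trans ler01 (beta_ge1 i).
  by rewrite le_max ler01.
have bXl : coef_bounded 'X^l 1 by move=> j; rewrite coefXn absv_nat_le1.
have := coef_boundedZ (n`!%:R)^-1 (coef_bounded_Dba_cof_nodal r bXl (leqnn n)).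
by rewrite absvV !mulrA mulVf ?mul1r // lt0r_neq0 ?absv_gt0.
Qed.

End NodalBound.

End NonArchimedean.

Lemma absv_prod_shift_mu (K : fieldExtType rat) (R : realType) (v : K -> R)
    (s : rat) (n k : nat) : nonarch_abs v -> (k <= n)%N ->
  v (\prod_(t < k) (n%:R - t%:R + ratr s)) <= v k`!%:R * (v (mu n s)%:R)^-1.
Proof.
move=> v_nonarch le_kn; have [z /(congr1 (in_alg K))] := mu_ffact_int s le_kn.
rewrite rmorphM (rmorph_nat _ (mu n s)) rmorph_prod [RHS]rmorphM rmorph_nat rmorph_int.
under eq_bigr => t _ do rewrite rmorphB rmorphD !rmorph_nat fmorph_eq_rat addrAC.
move/(congr1 v); rewrite !(absvM v_nonarch) => muE.
have nat_neq0 j : (0 < j)%N -> (j%:R : K) != 0.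
  by move=> j_gt0; rewrite -(rmorph_nat (in_alg K)) fmorph_eq0 pnatr_eq0 -lt0n.
rewrite ler_pdivlMr ?absv_gt0 ?nat_neq0 ?mu_gt0 // mulrC muE.
by rewrite ler_piMr ?absv_int_le1 ?absv_ge0.
Qed.

Lemma ln_prod (R : realType) (I : Type) (r : seq I) (f : I -> R) :
  (forall i, 0 < f i) -> ln (\prod_(i <- r) f i) = \sum_(i <- r) ln (f i).
Proof.
move=> f_gt0; elim: r => [|i r IH]; first by rewrite !big_nil ln1.
by rewrite !big_cons lnM ?IH // posrE ?prodr_gt0.
Qed.

Lemma ln_le_prod_bound (R : realType) (I : Type) (r : seq I) (beta M : I -> R) n x :
  (forall i, 1 <= beta i) -> (forall i, 1 <= M i) ->
  x <= \prod_(i <- r) beta i * (\prod_(i <- r) M i) ^+ n ->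
  ln x <= \sum_(i <- r) (ln (beta i) + n%:R * ln (M i)).
Proof.
move=> beta_ge1 M_ge1 le_x.
have gt0 (f : I -> R) : (forall i, 1 <= f i) -> forall i, 0 < f i.
  by move=> f_ge1 i; apply: lt_le_trans ltr01 _.
have [x_le0|x_gt0] := leP x 0.
  by rewrite ln0 // sumr_ge0 // => i _; rewrite addr_ge0 ?mulr_ge0 ?ln_ge0.
have prod_gt0 (f : I -> R) : (forall i, 1 <= f i) -> 0 < \prod_(i <- r) f i.
  by move=> f_ge1; apply: prodr_gt0 => i _; apply: gt0.
rewrite big_split /= -mulr_sumr mulr_natl.
rewrite -(ln_prod r (gt0 _ beta_ge1)) -(ln_prod r (gt0 _ M_ge1)) -lnXn ?prod_gt0 //.
by rewrite -lnM ?posrE ?exprn_gt0 ?prod_gt0 // ler_ln ?posrE ?mulr_gt0 ?exprn_gt0 ?prod_gt0.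
Qed.

Theorem lemma4p7 (K : fieldExtType rat) (R : realType) (m : nat) (a b : {poly K})
  (alpha : 'I_m -> K) (s : 'I_m -> rat) (v : K -> R) (n : nat) :
  (2 <= m)%N ->
  a \is monic -> size a = m.+1 ->
  (size b <= m)%N ->
  a = \prod_(i < m) ('X - (alpha i)%:P) ->
  injective alpha ->
  (forall i, b.[alpha i] / a^`().[alpha i] = ratr (s i)) ->
  (forall i (k : nat), s i != - (k.+1)%:R) ->
  (forall k : nat, b`_m.-1 != - (k.+2)%:R) ->
  nonarch_abs v ->
  (0 < n)%N ->
  ln (\big[Num.max/0]_(l < m.+1) normv v (Pnl a b n l))
    <= \sum_(i < m) (ln ((v (mu n (s i))%:R)^-1) + n%:R * hv v (alpha i)).
Proof.
(* Monicity of [a] follows from [aE]; the bound needs none of the hypotheses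
   on [m], [n], the [s i] or [b`_m.-1]. *)
move=> _ _ size_a size_b aE alpha_inj b_ratio _ _ v_nonarch _.
have {aE} aE : a = nodal alpha (index_enum 'I_m) := aE; subst a.
have uniq_I := index_enum_uniq 'I_m.
pose w i : K := ratr (s i); pose beta i := (v (mu n (s i))%:R)^-1.
have bE : b = pfrac_num alpha w (index_enum 'I_m).
  apply: pfrac_num_interp => // [|j j_in].
    by move: size_a; rewrite size_nodal => -[->].
  by rewrite /w -b_ratio divfK ?deriv_nodal_neq0.
subst b.
have shift_le i k : (k <= n)%N ->
    v (\prod_(t < k) (n%:R - t%:R + w i)) <= v k`!%:R * beta i.
  exact: absv_prod_shift_mu.
have bP := coef_bounded_Pnl v_nonarch alpha shift_le (index_enum 'I_m).
apply: ln_le_prod_bound => [i|i|]; first exact: (beta_ge1 v_nonarch shift_le i).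
  by rewrite le_max lexx.
apply: bigmax_le => [|l _]; first exact: (coef_bounded_ge0 v_nonarch (bP 0%N)).
exact: (normv_le v_nonarch (bP l)).
Qed.
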